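(* Let $\phi:\mathcal{E}\to\mathcal{F}$ be a morphism of tropical vector bundles of ranks $e$ and $f$ over a tropical cycle $X$. Let $Z=\{0,1,\dots,ef\}\subseteq\mathbb{R}$, regarded as a $0$-dimensional tropical cycle (discrete topology, each point a $0$-cell with chart to $\mathbb{R}^0$, all weights equal to $1$). Then the map $\mathrm{rank}(\phi):|X|\to\mathbb{Z}$, $p\mapsto\mathrm{troprank}(\phi_p)$, takes values in $Z$ and defines a morphism of tropical cycles $X\to Z$.
   Context: $\mathbb{T}=\mathbb{R}\cup\{-\infty\}$ with $\oplus=\max$, $\odot=+$; $G(r\times s)$ are $r\times s$ tropical matrices with at most one finite entry per row. Tropical vector bundles over $X$ are given by local trivializations $U_i\times\mathbb{R}^r$ glued by transition maps into the group $G(r)$ of tropical matrices with exactly one finite entry per row and column. A morphism $\phi:\mathcal{E}\to\mathcal{F}$ commutes with projections and on common trivializations $U$ is given by $A:U\to G(f\times e)$ (entries regular invertible functions or constantly $-\infty$); the stalk map $\phi_p$ is the tropical linear map $\mathbb{T}^e\to\mathbb{T}^f$ with matrix $A(p)$. $\mathrm{troprank}(A)=k$ iff all $(k+1)\times(k+1)$ tropical minors equal $-\infty$ and some $k\times k$ minor does not. A morphism of (abstract) tropical cycles is a map sending each polyhedron into a polyhedron and which, in the local fan charts, is a morphism of fans (integer affine linear). *)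

From HB Require Import structures.
From mathcomp Require Import all_boot all_order all_algebra all_fingroup.
From mathcomp Require Import all_classical all_reals all_analysis.
Set Implicit Arguments. Unset Strict Implicit. Unset Printing Implicit Defensive.
Import Order.TTheory GRing.Theory Num.Theory.
Import numFieldNormedType.Exports.
Local Open Scope classical_set_scope.
Local Open Scope ring_scope.

(* Tropical numbers  T = R u {-oo}, encoded as option R (None = -oo).  *)
Definition trop (R : realType) := option R.

Definition tadd {R : realType} (a b : trop R) : trop R :=
  match a, b with
  | None, _ => b
  | _, None => a
  | Some x, Some y => Some (Num.max x y)
  end.

Definition tmul {R : realType} (a b : trop R) : trop R :=
  match a, b with
  | Some x, Some y => Some (x + y)
  | _, _ => None
  end.

Definition tmx_mul {R : realType} {m n k : nat}
  (A : 'M[trop R]_(m, n)) (B : 'M[trop R]_(n, k)) : 'M[trop R]_(m, k) :=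
  \matrix_(i, l) \big[tadd/None]_(j < n) tmul (A i j) (B j l).

Definition tid {R : realType} (r : nat) : 'M[trop R]_r :=
  \matrix_(i, j) if i == j then Some 0 else None.

Definition Gmx {R : realType} {m n : nat} (A : 'M[trop R]_(m, n)) : Prop :=
  forall i j1 j2, A i j1 <> None -> A i j2 <> None -> j1 = j2.

Definition Gsq {R : realType} {r : nat} (A : 'M[trop R]_r) : Prop :=
  Gmx A /\ Gmx A^T /\ (forall i, exists j, A i j <> None)
                  /\ (forall j, exists i, A i j <> None).

Definition tdet {R : realType} {k : nat} (A : 'M[trop R]_k) : trop R :=
  \big[tadd/None]_(s : 'S_k) \big[tmul/Some 0]_(i < k) A i (s i).

Definition is_troprank {R : realType} {m n : nat} (A : 'M[trop R]_(m, n))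
  (k : nat) : Prop :=
  (forall (fr : 'I_k.+1 -> 'I_m) (fc : 'I_k.+1 -> 'I_n),
      injective fr -> injective fc -> tdet (mxsub fr fc A) = None) /\
  (exists (fr : 'I_k -> 'I_m) (fc : 'I_k -> 'I_n),
      [/\ injective fr, injective fc & tdet (mxsub fr fc A) <> None]).

Definition intmx {R : realType} {m n : nat} (M : 'M[int]_(m, n)) : 'M[R]_(m, n) :=
  map_mx (fun z : int => z%:~R) M.

Definition int_affine {R : realType} {n m : nat}
  (h : 'rV[R]_n -> 'rV[R]_m) : Prop :=
  exists (M : 'M[int]_(n, m)) (c : 'rV[R]_m), forall x, h x = x *m intmx M + c.

Definition rat_polyhedron {R : realType} {n : nat} (P : set 'rV[R]_n) : Prop :=
  exists (k : nat) (A : 'M[int]_(n, k)) (b : 'rV[R]_k),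
    P = [set x | forall i, (x *m intmx A) 0 i <= b 0 i].

Definition rat_cone {R : realType} {n : nat} (P : set 'rV[R]_n) : Prop :=
  exists (k : nat) (A : 'M[int]_(n, k)),
    P = [set x | forall i, (x *m intmx A) 0 i <= 0].

Definition is_face {R : realType} {n : nat} (P Fc : set 'rV[R]_n) : Prop :=
  exists (a : 'cV[R]_n) (b : R),
    [/\ (forall x, P x -> (x *m a) 0 0 <= b),
        Fc = [set x | P x /\ (x *m a) 0 0 = b] & Fc !=set0].

Definition cont_on {X Y : topologicalType} (A : set X) (h : X -> Y) : Prop :=
  {within A, continuous h}.

Record tcycle (R : realType) (X : topologicalType) := TCycle {
  tc_n : nat;
  tc_cell : 'I_tc_n -> set X;
  tc_cover : forall p : X, exists s, tc_cell s p;
  tc_edim : 'I_tc_n -> nat;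
  tc_emb : forall s, X -> 'rV[R]_(tc_edim s);
  tc_emb_poly : forall s, rat_polyhedron (tc_emb s @` tc_cell s);
  tc_cell_nonempty : forall s, tc_cell s !=set0;
  tc_emb_inj : forall s x y, tc_cell s x -> tc_cell s y ->
      tc_emb s x = tc_emb s y -> x = y;
  tc_emb_cont : forall s, cont_on (tc_cell s) (tc_emb s);
  tc_emb_open : forall s (O : set X), open O ->
      exists O' : set 'rV[R]_(tc_edim s), open O' /\
        tc_emb s @` (O `&` tc_cell s) = O' `&` (tc_emb s @` tc_cell s);
  tc_faces : forall s (Fc : set 'rV[R]_(tc_edim s)),
      is_face (tc_emb s @` tc_cell s) Fc ->
      exists t, tc_cell t = tc_cell s `&` (tc_emb s @^-1` Fc);
  tc_inter : forall s t, tc_cell s `&` tc_cell t = set0 \/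
      exists u, [/\ tc_cell u = tc_cell s `&` tc_cell t,
                    is_face (tc_emb s @` tc_cell s) (tc_emb s @` tc_cell u) &
                    is_face (tc_emb t @` tc_cell t) (tc_emb t @` tc_cell u)];
  tc_compat : forall s t, tc_cell t `<=` tc_cell s ->
      exists h : 'rV[R]_(tc_edim t) -> 'rV[R]_(tc_edim s),
        int_affine h /\ forall x, tc_cell t x -> tc_emb s x = h (tc_emb t x);
  tc_chdim : X -> nat;
  tc_chdom : X -> set X;
  tc_chmap : forall q, X -> 'rV[R]_(tc_chdim q);
  tc_chdom_open : forall q, open (tc_chdom q);
  tc_chdom_in : forall q, tc_chdom q q;
  tc_ch_inj : forall q x y, tc_chdom q x -> tc_chdom q y ->
      tc_chmap q x = tc_chmap q y -> x = y;
  tc_ch_cont : forall q, cont_on (tc_chdom q) (tc_chmap q);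
  tc_ch_open : forall q (O : set X), open O ->
      exists O' : set 'rV[R]_(tc_chdim q), open O' /\
        tc_chmap q @` (O `&` tc_chdom q) = O' `&` (tc_chmap q @` tc_chdom q);
  tc_ch_fan : forall q, exists (k : nat) (cones : 'I_k -> set 'rV[R]_(tc_chdim q)),
      (forall i, rat_cone (cones i)) /\
      exists O' : set 'rV[R]_(tc_chdim q), open O' /\
        tc_chmap q @` tc_chdom q = O' `&` \bigcup_(i in [set: 'I_k]) cones i;
  tc_ch_cell : forall q s,
      exists h : 'rV[R]_(tc_edim s) -> 'rV[R]_(tc_chdim q),
        int_affine h /\
        forall x, tc_chdom q x -> tc_cell s x -> tc_chmap q x = h (tc_emb s x);
  tc_weight : 'I_tc_n -> nat;
  tc_weight_pos : forall s,
      (forall t, tc_cell s `<=` tc_cell t -> tc_cell t `<=` tc_cell s) ->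
      (0 < tc_weight s)%N
}.

Arguments tc_cell {R X} _ _.
Arguments tc_chdom {R X} _ _.
Arguments tc_chdim {R X} _ _.
Arguments tc_chmap {R X} _ _.

Definition reg_inv {R : realType} {X : topologicalType} (C : tcycle R X)
  (U : set X) (g : X -> R) : Prop :=
  forall p, U p -> exists q, exists2 W : set X,
      [/\ open W, W p & W `<=` U `&` tc_chdom C q] &
      exists (a : 'cV[int]_(tc_chdim C q)) (b : R),
        forall x, W x -> g x = (tc_chmap C q x *m intmx a) 0 0 + b.

Definition reg_entries {R : realType} {X : topologicalType} (C : tcycle R X)
  {m n : nat} (U : set X) (M : X -> 'M[trop R]_(m, n)) : Prop :=
  forall a b, (forall p, U p -> M p a b = None) \/
    exists2 g, reg_inv C U g & forall p, U p -> M p a b = Some (g p).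

(* Convention: coordinates in chart j = vb_trans i j (.) coordinates   *)
(* in chart i.                                                          *)
Record tvbundle (R : realType) (X : topologicalType) (C : tcycle R X)
  (r : nat) := TVBundle {
  vb_idx : Type;
  vb_U : vb_idx -> set X;
  vb_U_open : forall i, open (vb_U i);
  vb_cover : forall p, exists i, vb_U i p;
  vb_trans : vb_idx -> vb_idx -> X -> 'M[trop R]_r;
  vb_trans_G : forall i j p, vb_U i p -> vb_U j p -> Gsq (vb_trans i j p);
  vb_trans_reg : forall i j, reg_entries C (vb_U i `&` vb_U j) (vb_trans i j);
  vb_cocycle_id : forall i p, vb_U i p -> vb_trans i i p = tid r;
  vb_cocycle : forall i j k p, vb_U i p -> vb_U j p -> vb_U k p ->
      tmx_mul (vb_trans j k p) (vb_trans i j p) = vb_trans i k p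
}.

Arguments vb_U {R X C r} _ _.
Arguments vb_trans {R X C r} _ _ _.

Record tvmorph (R : realType) (X : topologicalType) (C : tcycle R X)
  (e f : nat) (E : tvbundle C e) (F : tvbundle C f) := TVMorph {
  mo_A : vb_idx E -> vb_idx F -> X -> 'M[trop R]_(f, e);
  mo_G : forall i j p, vb_U E i p -> vb_U F j p -> Gmx (mo_A i j p);
  mo_reg : forall i j, reg_entries C (vb_U E i `&` vb_U F j) (mo_A i j);
  mo_compat : forall i i' j j' p,
      vb_U E i p -> vb_U E i' p -> vb_U F j p -> vb_U F j' p ->
      tmx_mul (mo_A i' j' p) (vb_trans E i i' p)
      = tmx_mul (vb_trans F j j' p) (mo_A i j p)
}.

Arguments mo_A {R X C e f E F} _ _ _.

Definition Zpts {R : realType} (n : nat) : set R :=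
  [set x | exists2 k : nat, (k <= n)%N & x = k%:R].

(* A morphism X -> Z: values in |Z|, each polyhedron of X is sent into a
   polyhedron {z} of Z, and locally (on an open piece of a fan chart of X
   mapped into the open star {g p} of the 0-cell of Z containing g p) the
   map, read in the fan charts (the chart of Z at a point being the map to
   R^0), is integer affine linear. *)
Definition trop_morph_to_Z {R : realType} {X : topologicalType}
  (C : tcycle R X) (n : nat) (g : X -> R) : Prop :=
  [/\ (forall p, Zpts n (g p)),
      (forall s, exists2 z, Zpts n z & g @` tc_cell C s `<=` [set z]) &
      (forall p, exists q, exists2 O : set X,
          [/\ open O, O p & O `<=` tc_chdom C q] &
          g @` O `<=` [set g p] /\
          exists h : 'rV[R]_(tc_chdim C q) -> 'rV[R]_0,
            int_affine h /\
            forall x, O x -> (fun _ : R => (0 : 'rV[R]_0)) (g x) = h (tc_chmap C q x))].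

From HB Require Import structures.
From mathcomp Require Import all_boot all_order all_algebra all_fingroup.
From mathcomp Require Import all_classical all_reals all_analysis.
From mathcomp Require Import lra.
Import Order.TTheory GRing.Theory Num.Theory.
Import numFieldNormedType.Exports.
Local Open Scope classical_set_scope.
Local Open Scope ring_scope.
Set Implicit Arguments. Unset Strict Implicit. Unset Printing Implicit Defensive.

(* At a point p, the matrices of phi in two pairs of local trivializations
   differ by multiplication on both sides with elements of G(e) and G(f),
   which only permute rows and columns.  A tropical minor is finite iff its
   support contains a permutation, so the tropical rank is the size of a
   maximum matching in the support, and it does not depend on the
   trivializations.  On a common trivialization every entry is regular
   invertible or constantly -oo, so the support, hence the rank, is locally
   constant.  A locally constant function is constant on every cell, a cell
   being homeomorphic to a convex polyhedron and thus connected; near each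
   point it is the constant map, which reads as an integer affine map in the
   fan charts. *)

Section TropicalRank.
Variable R : realType.
Implicit Types (x y : trop R) (m n k : nat).

Lemma isSome_tadd x y : isSome (tadd x y) = isSome x || isSome y.
Proof. by case: x; case: y. Qed.

Lemma isSome_tmul x y : isSome (tmul x y) = isSome x && isSome y.
Proof. by case: x; case: y. Qed.

Lemma isSome_neqNone x : x <> None <-> isSome x.
Proof. by case: x. Qed.

Lemma isSome_big_tadd (I : finType) (F : I -> trop R) :
  isSome (\big[tadd/None]_i F i) = [exists i, isSome (F i)].
Proof. by rewrite (big_morph _ isSome_tadd (erefl : isSome None = false)) big_orE. Qed.

Lemma isSome_big_tmul (I : finType) (F : I -> trop R) :
  isSome (\big[tmul/Some 0]_i F i) = [forall i, isSome (F i)].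
Proof. by rewrite (big_morph _ isSome_tmul (erefl : isSome (Some 0) = true)) big_andE. Qed.

Lemma isSome_tdet k (M : 'M[trop R]_k) :
  isSome (tdet M) = [exists s : 'S_k, [forall i, isSome (M i (s i))]].
Proof. by rewrite isSome_big_tadd; apply: eq_existsb => s; rewrite isSome_big_tmul. Qed.

Definition has_matching m n (M : 'M[trop R]_(m, n)) k :=
  exists (fr : 'I_k -> 'I_m) (fc : 'I_k -> 'I_n),
    [/\ injective fr, injective fc & forall t, isSome (M (fr t) (fc t))].

Lemma has_matchingP m n (M : 'M[trop R]_(m, n)) k :
  (exists (fr : 'I_k -> 'I_m) (fc : 'I_k -> 'I_n),
      [/\ injective fr, injective fc & tdet (mxsub fr fc M) <> None])
  <-> has_matching M k.
Proof.
split=> [[fr [fc [fr_inj fc_inj]]]|[fr [fc [fr_inj fc_inj Mf]]]].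
- move/isSome_neqNone; rewrite isSome_tdet => /existsP[s /forallP Ms].
  exists fr, (fc \o s); split=> [//||t]; first exact: inj_comp fc_inj (@perm_inj _ _).
  by have := Ms t; rewrite mxE.
- exists fr, fc; split=> //; apply/isSome_neqNone; rewrite isSome_tdet.
  by apply/existsP; exists 1%g; apply/forallP => t; rewrite mxE perm1.
Qed.

Lemma is_troprank_matching m n (M : 'M[trop R]_(m, n)) k :
  is_troprank M k <-> has_matching M k /\ ~ has_matching M k.+1.
Proof.
split=> [[noMinor /has_matchingP Mk]|[/has_matchingP Mk noMk1]]; split=> //.
- by move=> /has_matchingP[fr [fc [fr_inj fc_inj]]]; rewrite noMinor.
- move=> fr fc fr_inj fc_inj; apply: contrapT => minor; apply: noMk1.
  by apply/has_matchingP; exists fr, fc.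
Qed.

Lemma has_matching0 m n (M : 'M[trop R]_(m, n)) : has_matching M 0.
Proof.
have from_ord0 (T : Type) : 'I_0 -> T by case.
by exists (from_ord0 _), (from_ord0 _); split=> -[].
Qed.

Lemma has_matching_leq m n (M : 'M[trop R]_(m, n)) k l :
  (l <= k)%N -> has_matching M k -> has_matching M l.
Proof.
move=> le_lk [fr [fc [fr_inj fc_inj Mf]]].
have widen_inj : injective (widen_ord le_lk) by move=> x y [] /val_inj.
exists (fr \o widen_ord le_lk), (fc \o widen_ord le_lk).
by split=> [||t]; [exact: inj_comp fr_inj widen_inj|exact: inj_comp fc_inj widen_inj|exact: Mf].
Qed.

Lemma has_matching_bound m n (M : 'M[trop R]_(m, n)) k :
  has_matching M k -> (k <= m)%N /\ (k <= n)%N.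
Proof.
by move=> [fr [fc [/leq_card fr_le /leq_card fc_le _]]]; rewrite !card_ord in fr_le fc_le.
Qed.

Lemma troprank_exists m n (M : 'M[trop R]_(m, n)) :
  exists k, [/\ (k <= m)%N, (k <= n)%N & is_troprank M k].
Proof.
have ex_matching : exists k, `[< has_matching M k >].
  by exists 0%N; apply/asboolP; exact: has_matching0.
have matching_le_m k : `[< has_matching M k >] -> (k <= m)%N.
  by move=> /asboolP /has_matching_bound[].
have [k /asboolP Mk maxk] := ex_maxnP ex_matching matching_le_m.
have [le_km le_kn] := has_matching_bound Mk.
exists k; split=> //; apply/is_troprank_matching; split=> // /asboolP /maxk.
by rewrite ltnn.
Qed.

Lemma troprank_unique m n (M : 'M[trop R]_(m, n)) k l :
  is_troprank M k -> is_troprank M l -> k = l.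
Proof.
move=> /is_troprank_matching[Mk noMk1] /is_troprank_matching[Ml noMl1].
case: (ltngtP k l) => // [lt_kl|lt_lk].
- by case: noMk1; exact: has_matching_leq lt_kl Ml.
- by case: noMl1; exact: has_matching_leq lt_lk Mk.
Qed.

Definition troprank m n (M : 'M[trop R]_(m, n)) : nat :=
  projT1 (cid (troprank_exists M)).

Lemma troprankP m n (M : 'M[trop R]_(m, n)) :
  [/\ (troprank M <= m)%N, (troprank M <= n)%N & is_troprank M (troprank M)].
Proof. exact: projT2 (cid (troprank_exists M)). Qed.

Section SupportPermutation.
Variables (m n : nat) (M N : 'M[trop R]_(m, n)) (rho : 'S_m) (tau : 'S_n).
Hypothesis suppNM : forall a c, isSome (N a c) = isSome (M (rho a) (tau c)).

Lemma has_matching_perm k : has_matching M k <-> has_matching N k.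
Proof.
split=> [[fr [fc [fr_inj fc_inj Mf]]]|[fr [fc [fr_inj fc_inj Nf]]]].
- exists ((rho^-1)%g \o fr), ((tau^-1)%g \o fc).
  split=> [||t]; [exact: inj_comp (@perm_inj _ _) fr_inj|
                  exact: inj_comp (@perm_inj _ _) fc_inj|].
  by rewrite /= suppNM !permKV.
- exists (rho \o fr), (tau \o fc).
  split=> [||t]; [exact: inj_comp (@perm_inj _ _) fr_inj|
                  exact: inj_comp (@perm_inj _ _) fc_inj|].
  by rewrite /= -suppNM.
Qed.

Lemma is_troprank_perm k : is_troprank M k -> is_troprank N k.
Proof.
move=> /is_troprank_matching[Mk noMk1]; apply/is_troprank_matching.
by rewrite -!has_matching_perm.
Qed.

End SupportPermutation.

Lemma Gsq_support_perm r (T : 'M[trop R]_r) :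
  Gsq T -> exists s : 'S_r, forall i j, isSome (T i j) = (j == s i).
Proof.
move=> [rowG [colG [rowT _]]].
have /fin_all_exists[g Tg] : forall i, exists j, isSome (T i j).
  by move=> i; have [j /isSome_neqNone] := rowT i; exists j.
have g_inj : injective g.
  move=> i1 i2 eq_g; apply: (colG (g i1)); rewrite mxE; apply/isSome_neqNone.
    exact: Tg.
  by rewrite eq_g; exact: Tg.
exists (perm g_inj) => i j; rewrite permE.
apply/idP/eqP => [/isSome_neqNone Tij|->//].
by apply: (rowG i) Tij _; apply/isSome_neqNone.
Qed.

Lemma isSome_tmx_mulr p r (M : 'M[trop R]_(p, r)) (T : 'M[trop R]_r) (s : 'S_r) :
  (forall i j, isSome (T i j) = (j == s i)) ->
  forall a c, isSome (tmx_mul M T a c) = isSome (M a ((s^-1)%g c)).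
Proof.
move=> suppT a c; rewrite mxE isSome_big_tadd.
apply/existsP/idP => [[j]|Mac]; last first.
  by exists ((s^-1)%g c); rewrite isSome_tmul Mac suppT permKV eqxx.
by rewrite isSome_tmul suppT => /andP[Maj /eqP->]; rewrite permK.
Qed.

Lemma isSome_tmx_mull r q (T : 'M[trop R]_r) (M : 'M[trop R]_(r, q)) (s : 'S_r) :
  (forall i j, isSome (T i j) = (j == s i)) ->
  forall a c, isSome (tmx_mul T M a c) = isSome (M (s a) c).
Proof.
move=> suppT a c; rewrite mxE isSome_big_tadd.
apply/existsP/idP => [[j]|Mac]; last first.
  by exists (s a); rewrite isSome_tmul Mac suppT eqxx.
by rewrite isSome_tmul suppT => /andP[/eqP<-].
Qed.

Lemma is_troprank_Gsq_conj e f (A A' : 'M[trop R]_(f, e)) (TE : 'M[trop R]_e)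
    (TF : 'M[trop R]_f) k :
  Gsq TE -> Gsq TF -> tmx_mul A' TE = tmx_mul TF A ->
  is_troprank A k -> is_troprank A' k.
Proof.
move=> /Gsq_support_perm[sE suppE] /Gsq_support_perm[sF suppF] conj.
apply: (is_troprank_perm (rho := sF) (tau := sE)) => a c.
by rewrite -(isSome_tmx_mull _ suppF) -conj (isSome_tmx_mulr _ suppE) permK.
Qed.

End TropicalRank.

Definition locally_constant (T : topologicalType) (Y : Type) (g : T -> Y) :=
  forall p, exists W, [/\ open W, W p & forall x, W x -> g x = g p].

Section LocallyConstant.
Variables (T : topologicalType) (Y : Type) (g : T -> Y).
Hypothesis g_loc_const : locally_constant g.

Lemma open_preimage_locally_constant (P : set Y) : open (g @^-1` P).
Proof.
have -> : g @^-1` P = \bigcup_(W in [set W | open W /\ W `<=` g @^-1` P]) W.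
  apply/seteqP; split=> [x Px|x [W [_ WP] Wx]]; last exact: WP.
  have [W [oW Wx gW]] := g_loc_const x.
  by exists W => //; split=> // z Wz; rewrite /preimage /= gW.
by apply: bigcup_open => W [].
Qed.

Lemma connected_locally_constant (S : set T) x y :
  connected S -> S x -> S y -> g y = g x.
Proof.
move=> connS Sx Sy.
have closed_fiber : closed (g @^-1` [set g x]).
  have -> : g @^-1` [set g x] = ~` (g @^-1` ~` [set g x]).
    by rewrite preimage_setC setCK.
  exact/open_closedC/open_preimage_locally_constant.
have fiberS : S `&` g @^-1` [set g x] = S.
  apply: connS; first by exists x.
  - by exists (g @^-1` [set g x]) => //; exact: open_preimage_locally_constant.
  - by exists (g @^-1` [set g x]).
by have [] : (S `&` g @^-1` [set g x]) y by rewrite fiberS.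
Qed.

End LocallyConstant.

Lemma connected_open_injection (T U : topologicalType) (S : set T) (h : T -> U) :
  (forall x y, S x -> S y -> h x = h y -> x = y) ->
  (forall V, open V -> exists V', open V' /\ h @` (V `&` S) = V' `&` h @` S) ->
  connected (h @` S) -> connected S.
Proof.
move=> h_inj h_open connhS B [b Bb] [V oV BSV] [D cD BSD].
have [V1 [oV1 hVS]] := h_open V oV.
have [V2 [oV2 hDS]] := h_open _ (closed_openC cD).
have BS : B `<=` S by rewrite BSV; move=> ? [].
have hB_open : h @` B = h @` S `&` V1 by rewrite BSV setIC hVS setIC.
have hB_closed : h @` B = h @` S `&` ~` V2.
  apply/seteqP; split=> [_ [x Bx <-]|_ [[x Sx <-] V2hx]].
    split; first by exists x => //; exact: BS.
    move=> V2hx; have : (V2 `&` h @` S) (h x) by split=> //; exists x => //; exact: BS.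
    rewrite -hDS => -[x' [nDx' Sx'] hx'x]; apply: nDx'.
    by rewrite (h_inj _ _ Sx' (BS _ Bx) hx'x); move: Bx; rewrite BSD => -[].
  exists x => //; rewrite BSD; split=> //; apply: contrapT => Dx; apply: V2hx.
  have : (h @` (~` D `&` S)) (h x) by exists x.
  by rewrite hDS => -[].
have hBS : h @` B = h @` S.
  apply: connhS; first by exists (h b), b.
  - by exists V1.
  - by exists (~` V2) => //; exact: open_closedC.
apply/seteqP; split=> // x Sx.
have [x' Bx' /h_inj eqx] : (h @` B) (h x) by rewrite hBS; exists x.
by rewrite -(eqx (BS _ Bx') Sx).
Qed.

Lemma connected_convex (R : realType) (V : normedModType R) (P : set V) :
  (forall x y t, P x -> P y -> 0 <= t <= 1 -> P (x + t *: (y - x))) -> connected P.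
Proof.
move=> convP; have [[x0 Px0]|noP] := pselect (P !=set0); last first.
  suff -> : P = set0 by exact: connected0.
  by apply/seteqP; split=> // x Px; apply: noP; exists x.
pose seg y := (fun t : R => x0 + t *: (y - x0)) @` `[0, 1].
have -> : P = \bigcup_(y in P) seg y.
  apply/seteqP; split=> [y Py|_ [y Py [t t01 <-]]].
    exists y => //; exists 1; first by rewrite /= in_itv/= ler01 lexx.
    by rewrite scale1r addrC subrK.
  by apply: convP => //; rewrite in_itv in t01.
apply: bigcup_connected.
  exists x0 => y _; exists 0; first by rewrite /= in_itv/= ler01 lexx.
  by rewrite scale0r addr0.
move=> y _; apply: connected_continuous_connected; first exact: segment_connected.
apply: continuous_subspaceT => t; apply: cvgD; first exact: cvg_cst.
by apply: cvgZr_tmp; exact: cvg_id.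
Qed.

Lemma rat_polyhedron_convex (R : realType) n (P : set 'rV[R]_n) :
  rat_polyhedron P -> forall x y t, P x -> P y -> 0 <= t <= 1 -> P (x + t *: (y - x)).
Proof.
move=> [k [A [b ->]]] x y t /= Px Py /andP[t_ge0 t_le1] i.
rewrite mulmxDl -scalemxAl mulmxBl.
move: (Px i) (Py i); set u := x *m intmx A; set v := y *m intmx A.
rewrite !mxE; nra.
Qed.

Lemma tc_cell_connected (R : realType) (X : topologicalType) (C : tcycle R X) s :
  connected (tc_cell C s).
Proof.
apply: connected_open_injection (@tc_emb_inj _ _ C s) (@tc_emb_open _ _ C s) _.
apply: connected_convex; apply: rat_polyhedron_convex; exact: tc_emb_poly.
Qed.

Lemma trop_morph_to_Z_locally_constant (R : realType) (X : topologicalType)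
    (C : tcycle R X) n (g : X -> nat) :
  (forall p, (g p <= n)%N) -> locally_constant g ->
  trop_morph_to_Z C n (fun p => (g p)%:R).
Proof.
move=> g_le g_loc; split=> [p|s|p]; first by exists (g p); first exact: g_le.
- have [p0 Sp0] := tc_cell_nonempty s.
  exists (g p0)%:R; first by exists (g p0).
  move=> _ [x Sx <-] /=.
  by rewrite (connected_locally_constant g_loc (@tc_cell_connected _ _ C s) Sp0 Sx).
- have [W [oW Wp gW]] := g_loc p.
  exists p; exists (W `&` tc_chdom C p).
    split=> [||x []//]; first exact/openI/tc_chdom_open.
    by split=> //; exact: tc_chdom_in.
  split; first by move=> _ [x [Wx _] <-]; rewrite /= gW.
  by exists (fun=> 0); split=> //; exists 0, 0 => x; apply/rowP => -[].
Qed.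

Lemma reg_entries_support (R : realType) (X : topologicalType) (C : tcycle R X)
    m n (U : set X) (M : X -> 'M[trop R]_(m, n)) x y a c :
  reg_entries C U M -> U x -> U y -> isSome (M x a c) = isSome (M y a c).
Proof. by move=> regM Ux Uy; case: (regM a c) => [M0|[g _ Mg]]; rewrite ?M0 ?Mg. Qed.

Definition bundle_chart (R : realType) (X : topologicalType) (C : tcycle R X) r
    (B : tvbundle C r) (p : X) : vb_idx B :=
  projT1 (cid (vb_cover B p)).

Lemma bundle_chartP (R : realType) (X : topologicalType) (C : tcycle R X) r
    (B : tvbundle C r) p : vb_U B (bundle_chart B p) p.
Proof. exact: projT2 (cid (vb_cover B p)). Qed.

Section MorphismRank.
Variables (R : realType) (X : topologicalType) (C : tcycle R X) (e f : nat).
Variables (E : tvbundle C e) (F : tvbundle C f) (phi : tvmorph E F).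

Lemma mo_troprank_change_chart i i' j j' p k :
  vb_U E i p -> vb_U E i' p -> vb_U F j p -> vb_U F j' p ->
  is_troprank (mo_A phi i j p) k -> is_troprank (mo_A phi i' j' p) k.
Proof.
move=> Ui Ui' Vj Vj'.
by apply: is_troprank_Gsq_conj (mo_compat phi Ui Ui' Vj Vj'); exact: vb_trans_G.
Qed.

Lemma mo_troprank_change_point i j x y k :
  (vb_U E i `&` vb_U F j) x -> (vb_U E i `&` vb_U F j) y ->
  is_troprank (mo_A phi i j x) k -> is_troprank (mo_A phi i j y) k.
Proof.
move=> Ux Uy; apply: (is_troprank_perm (rho := 1%g) (tau := 1%g)) => a c.
by rewrite !perm1; exact: reg_entries_support (mo_reg phi i j) Uy Ux.
Qed.

Definition mo_rank (p : X) : nat :=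
  troprank (mo_A phi (bundle_chart E p) (bundle_chart F p) p).

Lemma mo_rankP i j p :
  vb_U E i p -> vb_U F j p -> is_troprank (mo_A phi i j p) (mo_rank p).
Proof.
have [_ _ rankp] := troprankP (mo_A phi (bundle_chart E p) (bundle_chart F p) p).
move=> Ui Vj.
exact: mo_troprank_change_chart (bundle_chartP E p) Ui (bundle_chartP F p) Vj rankp.
Qed.

Lemma mo_rank_le p : (mo_rank p <= e * f)%N.
Proof.
have [le_f le_e _] := troprankP (mo_A phi (bundle_chart E p) (bundle_chart F p) p).
apply: leq_trans (leq_mul le_e le_f).
by rewrite /mo_rank; case: (troprank _) => // k; rewrite leq_pmulr.
Qed.

Lemma mo_rank_locally_constant : locally_constant mo_rank.
Proof.
move=> p; pose W := vb_U E (bundle_chart E p) `&` vb_U F (bundle_chart F p).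
have Wp : W p by split; exact: bundle_chartP.
exists W; split=> // [|x Wx]; first exact/openI/vb_U_open/vb_U_open.
apply: troprank_unique (mo_rankP Wx.1 Wx.2) _.
exact: mo_troprank_change_point Wp Wx (mo_rankP Wp.1 Wp.2).
Qed.

End MorphismRank.

Theorem mainTheorem5 (R : realType) (X : topologicalType) (C : tcycle R X)
  (e f : nat) (E : tvbundle C e) (F : tvbundle C f) (phi : tvmorph E F) :
  exists rk : X -> nat,
    [/\ (forall p, (rk p <= e * f)%N),
        (forall i j p, vb_U E i p -> vb_U F j p ->
           is_troprank (mo_A phi i j p) (rk p)) &
        trop_morph_to_Z C (e * f) (fun p => (rk p)%:R)].
Proof.
exists (mo_rank phi); split=> [p|i j p|]; [exact: mo_rank_le|exact: mo_rankP|].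
exact: trop_morph_to_Z_locally_constant (mo_rank_le phi) (mo_rank_locally_constant phi).
Qed.
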